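(* Let $p$ be an odd prime. For every simple rank $3$ $\mathbb{Z}_p$-invariant matroid structure on $\mathbb{Z}_p$ there exists a distinct difference system $S_1,\ldots,S_k$ in $\mathbb{Z}_p$ such that the bases of the matroid are exactly the $3$-element subsets of $\mathbb{Z}_p$ which are not a translate of a subset of any $S_i$.
   Context: For an abelian group $A$, subsets $S_1,\ldots,S_k \subseteq A$ form a distinct difference system if: (i) for any $i,j$ and any $x,y \in S_i$, $z,w \in S_j$ with $x \neq y$ and $z \neq w$, the equation $x-y=z-w$ implies $x=z$ and $y=w$; (ii) each $S_i$ contains $0$ and at least one other element; (iii) $S_i \cap S_j = \{0\}$ for $i \neq j$. $\mathbb{Z}_p$ acts on itself by translation; a matroid on $\mathbb{Z}_p$ is $\mathbb{Z}_p$-invariant if translates of bases are bases. A matroid is simple if every circuit has at least three elements. A translate of a set $T$ is a set $\{t+a : t \in T\}$. *)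

From HB Require Import structures.
From mathcomp Require Import all_boot all_order all_algebra.
Set Implicit Arguments. Unset Strict Implicit. Unset Printing Implicit Defensive.
Import GRing.Theory.
Local Open Scope ring_scope.

Section Defs.
Variable T : finZmodType.

Definition translate (T0 : {set T}) (a : T) : {set T} := [set t + a | t in T0].

Definition is_matroid_bases (B : {set {set T}}) : Prop :=
  B != set0 /\
  forall B1 B2, B1 \in B -> B2 \in B -> forall x, x \in B1 :\: B2 ->
    exists2 y, y \in B2 :\: B1 & (B1 :\ x) :|: [set y] \in B.

Definition independent (B : {set {set T}}) (X : {set T}) : Prop :=
  exists2 Bs, Bs \in B & X \subset Bs.

Definition circuit (B : {set {set T}}) (C : {set T}) : Prop :=
  ~ independent B C /\ forall D : {set T}, D \proper C -> independent B D.

Definition simple_matroid (B : {set {set T}}) : Prop :=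
  forall C, circuit B C -> (3 <= #|C|)%N.

Definition rank3 (B : {set {set T}}) : Prop :=
  forall Bs, Bs \in B -> #|Bs| = 3%N.

Definition translation_invariant (B : {set {set T}}) : Prop :=
  forall Bs a, Bs \in B -> translate Bs a \in B.

Definition distinct_difference_system (k : nat) (S : 'I_k -> {set T}) : Prop :=
  [/\ (forall i j x y z w, x \in S i -> y \in S i -> z \in S j -> w \in S j ->
        x != y -> z != w -> x - y = z - w -> x = z /\ y = w),
      (forall i, 0 \in S i /\ exists2 x, x \in S i & x != 0)
    & (forall i j, i != j -> S i :&: S j = [set 0])].
End Defs.

From mathcomp Require Import all_boot all_order all_algebra.
Set Implicit Arguments. Unset Strict Implicit. Unset Printing Implicit Defensive.
Import GRing.Theory.
Local Open Scope ring_scope.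

(* Call three points collinear when they do not form a basis.  In a simple
   rank 3 matroid every pair is independent, so basis exchange shows that the
   points collinear with two distinct points a, b form a line, spanned by any
   two of its distinct points; translation invariance maps lines to lines.
   In Z_p a nonzero translation fixing a line would make it the whole group,
   which is impossible as no basis lies on a line, so translations act freely
   on lines.  Choose in each translation class of lines with at least three
   points one representative through 0; these form the system S_i.  If
   x - y = z - w with x, y in S_i and z, w in S_j, translating S_j by x - z
   gives the line through x and y, that is S_i, hence i = j and, by freeness,
   x = z.  Finally a 3-set is dependent exactly when it lies on a line, i.e.
   in a translate of some S_i. *)

Section Translate.
Variable T : finZmodType.
Implicit Types (X Y : {set T}) (a b t x : T).

Lemma mem_translate X t x : (x \in translate X t) = (x - t \in X).
Proof.
apply/imsetP/idP => [[y yX ->]|xtX]; first by rewrite addrK.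
by exists (x - t); rewrite ?subrK.
Qed.

Lemma translate0 X : translate X 0 = X.
Proof. by apply/setP => x; rewrite mem_translate subr0. Qed.

Lemma translateD X a b : translate (translate X a) b = translate X (a + b).
Proof. by apply/setP => x; rewrite !mem_translate opprD addrA addrAC. Qed.

Lemma translateK X t : translate (translate X t) (- t) = X.
Proof. by rewrite translateD subrr translate0. Qed.

Lemma translateS X Y t : X \subset Y -> translate X t \subset translate Y t.
Proof. exact: imsetS. Qed.

Lemma card_translate X t : #|translate X t| = #|X|.
Proof. exact/card_imset/addIr. Qed.

Lemma translate_set3 a b x t : translate [set a; b; x] t = [set a + t; b + t; x + t].
Proof. by rewrite /translate !imsetU !imset_set1. Qed.

End Translate.

Section Triples.
Variable T : finType.

Lemma card_set3E (x y z : T) :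
  (#|[set x; y; z]| == 3%N) = [&& x != y, y != z & z != x].
Proof.
rewrite -setUA !cardsU1 cards1 !inE negb_or [z == x]eq_sym.
by case: (x == y); case: (x == z); case: (y == z).
Qed.

Lemma card3P (X : {set T}) : #|X| = 3%N ->
  exists x y z, [/\ x != y, y != z, z != x & X = [set x; y; z]].
Proof.
move=> X3; have /card_gt2P[x [y [z [[xX yX zX] [xy yz zx]]]]] : (2 < #|X|)%N.
  by rewrite X3.
exists x, y, z; split=> //; apply/esym/eqP.
have /eqP xyz3 : #|[set x; y; z]| == 3%N by rewrite card_set3E xy yz zx.
rewrite eqEcard X3 xyz3 leqnn andbT.
by apply/subsetP => u; rewrite !inE => /orP[/orP[]|] /eqP->.
Qed.

End Triples.

Section Lines.
Variables (T : finZmodType) (B : {set {set T}}).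
Hypotheses (bases_B : is_matroid_bases B) (rank3_B : rank3 B)
  (simple_B : simple_matroid B) (invariant_B : translation_invariant B).
Implicit Types (X : {set T}) (a b c d t x : T).

Lemma independentP X :
  reflect (independent B X) [exists Z, (Z \in B) && (X \subset Z)].
Proof.
apply: (iffP existsP) => [[Z /andP[ZB XZ]]|[Z ZB XZ]]; first by exists Z.
by exists Z; rewrite ZB.
Qed.

Lemma independent_card_le2 X : (#|X| <= 2)%N -> independent B X.
Proof.
have [n] := ubnP #|X|; elim: n X => // n IH X ltXn le2X.
apply/independentP; apply: contraT => depX.
have /simple_B : circuit B X.
  split=> [/independentP|D /proper_card ltDX]; first by rewrite (negbTE depX).
  by apply: IH; [exact: leq_trans ltDX _ | exact: leq_trans (ltnW ltDX) le2X].
by rewrite leqNgt ltnS le2X.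
Qed.

Lemma basis_through_pair a b :
  a != b -> exists2 e, e \notin [set a; b] & [set a; b; e] \in B.
Proof.
move=> ab; have [Z ZB abZ] : independent B [set a; b].
  by apply: independent_card_le2; rewrite cards2; case: (a != b).
have /card_gt0P[e] : (0 < #|Z :\: [set a; b]|)%N.
  by rewrite cardsD (setIidPr abZ) rank3_B // cards2 ab.
rewrite inE => /andP[eab eZ]; exists e => //.
suff -> : [set a; b; e] = Z by [].
apply/eqP; rewrite eqEcard rank3_B //.
have /eqP-> : #|[set a; b; e]| == 3%N.
  by move: eab; rewrite card_set3E !inE negb_or ab => /andP[ea eb]; rewrite eq_sym eb ea.
by rewrite subUset abZ sub1set eZ.
Qed.

Definition collinear a b c := [set a; b; c] \notin B.

Lemma collinear_swapl a b c : collinear a b c = collinear b a c.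
Proof.
rewrite /collinear; congr (_ \notin B); apply/setP => u.
by rewrite !inE; case: (u == a); case: (u == b).
Qed.

Lemma collinear_swapr a b c : collinear a b c = collinear a c b.
Proof.
rewrite /collinear; congr (_ \notin B); apply/setP => u.
by rewrite !inE; case: (u == a); case: (u == b); case: (u == c).
Qed.

Lemma collinear_aab a c : collinear a a c.
Proof. by apply/negP => /rank3_B/eqP; rewrite card_set3E eqxx. Qed.

Lemma collinear_aba a b : collinear a b a.
Proof. by rewrite collinear_swapr collinear_aab. Qed.

Lemma collinear_abb a b : collinear a b b.
Proof. by rewrite collinear_swapl collinear_aba. Qed.

Lemma collinear_translate a b c t :
  collinear (a + t) (b + t) (c + t) = collinear a b c.
Proof.
rewrite /collinear -translate_set3; congr negb; apply/idP/idP; last exact: invariant_B.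
by move/(invariant_B (- t)); rewrite translateK.
Qed.

(* The basis exchange axiom applied to [{a, b, e}] and [{a, c, d}], where
   [e] completes the independent pair [{a, b}] to a basis. *)
Lemma collinear_trans a b c d :
  a != b -> collinear a b c -> collinear a b d -> collinear a c d.
Proof.
move=> ab abc abd; apply/negP => acdB.
have [e eab abeB] := basis_through_pair ab.
have [_ exchange] := bases_B.
have e_notin_acd : e \in [set a; b; e] :\: [set a; c; d].
  move: eab; rewrite !inE eqxx orbT andbT negb_or => /andP[/negbTE-> _] /=.
  by apply/norP; split; apply/eqP => ee; [move: abc | move: abd];
    rewrite /collinear -ee abeB.
have [y] := exchange _ _ abeB acdB e e_notin_acd.
have -> : [set a; b; e] :\ e = [set a; b] by rewrite setUC setU1K.
rewrite !inE => /andP[/norP[/norP[ya _] _] /orP[/orP[/eqP yaE|/eqP->]|/eqP->]].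
- by rewrite yaE eqxx in ya.
- by rewrite (negbTE abc).
- by rewrite (negbTE abd).
Qed.

Definition line a b := [set x | collinear a b x].

Lemma mem_line_l a b : a \in line a b.
Proof. by rewrite inE collinear_aba. Qed.

Lemma lineC a b : line a b = line b a.
Proof. by apply/setP => x; rewrite !inE collinear_swapl. Qed.

Lemma line_rotate a b c : a != b -> a != c -> c \in line a b -> line a b = line a c.
Proof.
rewrite inE => ab ac abc; apply/setP => x; rewrite !inE; apply/idP/idP.
  exact: collinear_trans.
by apply: collinear_trans ac _; rewrite collinear_swapr.
Qed.

Lemma eq_line a b c d : a != b -> c \in line a b -> d \in line a b -> c != d ->
  line c d = line a b.
Proof.
move=> ab cab dab cd; have [ac|ac] := eqVneq a c.
  by subst c; rewrite -(line_rotate ab cd dab).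
rewrite (line_rotate ab ac cab) [RHS]lineC; apply/esym/line_rotate => //.
  by rewrite eq_sym.
by rewrite lineC -(line_rotate ab ac cab).
Qed.

Lemma line_translate a b t : translate (line a b) t = line (a + t) (b + t).
Proof.
apply/setP => x; rewrite mem_translate !inE -(collinear_translate _ _ _ t).
by rewrite subrK.
Qed.

Lemma basis_not_sub_line X a b : X \in B -> a != b -> ~~ (X \subset line a b).
Proof.
move=> XB ab; apply/negP => /subsetP Xab.
have [x [y [z [xy _ _ Xxyz]]]] := card3P (rank3_B XB).
have [xX yX zX] : [/\ x \in X, y \in X & z \in X] by rewrite Xxyz !inE !eqxx ?orbT.
have := Xab z zX; rewrite -(eq_line ab (Xab x xX) (Xab y yX) xy) inE.
by rewrite /collinear -Xxyz XB.
Qed.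

End Lines.

Section LineSystem.
Variables (T : finZmodType) (B : {set {set T}}).
Hypotheses (bases_B : is_matroid_bases B) (rank3_B : rank3 B)
  (simple_B : simple_matroid B) (invariant_B : translation_invariant B).
Implicit Types (L M N U X : {set T}) (a b c d t x : T).

Local Notation line := (line B).

Definition long_line L :=
  (2 < #|L|)%N && [exists a, exists b, (a != b) && (L == line a b)].

Definition canonical_line L :=
  [&& 0 \in L, long_line L &
      [forall t, (0 \in translate L t) ==> (enum_rank L <= enum_rank (translate L t))%N]].

Lemma long_lineE L c d : long_line L -> c \in L -> d \in L -> c != d -> L = line c d.
Proof.
case/andP=> _ /existsP[a /existsP[b /andP[ab /eqP->]]] cL dL cd.
by rewrite (eq_line bases_B rank3_B simple_B ab cL dL cd).
Qed.

Lemma canonical_translate_eq M N t :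
  canonical_line M -> canonical_line N -> M = translate N t -> M = N.
Proof.
case/and3P=> M0 _ /forallP/(_ (- t)) minM.
case/and3P=> N0 _ /forallP/(_ t) minN MN.
have NM : N = translate M (- t) by rewrite MN translateK.
apply/enum_rank_inj/val_inj/eqP; rewrite eqn_leq.
by rewrite -NM N0 /= in minM; rewrite -MN M0 /= in minN; rewrite minM minN.
Qed.

Lemma exists_canonical_translate a b :
  a != b -> (2 < #|line a b|)%N -> exists s, canonical_line (translate (line a b) s).
Proof.
move=> ab long_ab.
pose through0 := [pred t | 0 \in translate (line a b) t].
have zero_in : through0 (- a) by rewrite inE mem_translate opprK add0r mem_line_l.
pose rank_of t := val (enum_rank (translate (line a b) t)).
case: (@arg_minnP _ _ through0 rank_of zero_in) => s s0 s_min.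
exists s; apply/and3P; split.
- exact: s0.
- rewrite /long_line card_translate long_ab (line_translate invariant_B).
  apply/existsP; exists (a + s); apply/existsP; exists (b + s).
  by rewrite (inj_eq (addIr s)) ab /=.
- apply/forallP => t; apply/implyP; rewrite translateD => t0.
  exact: s_min.
Qed.

Definition canonical_lines := [set L | canonical_line L].

Definition line_system (i : 'I_#|canonical_lines|) : {set T} := enum_val i.

Lemma line_system_canonical i : canonical_line (line_system i).
Proof. by have := enum_valP i; rewrite inE. Qed.

Lemma line_systemE i c d :
  c \in line_system i -> d \in line_system i -> c != d -> line_system i = line c d.
Proof. by case/and3P: (line_system_canonical i) => _ /long_lineE + _; apply. Qed.

Lemma distinct_difference_line_system :
  (forall a b t, a != b -> translate (line a b) t = line a b -> t = 0) ->
  distinct_difference_system line_system.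
Proof.
move=> line_free; split.
- move=> i j x y z w xi yi zj wj xy zw xyzw.
  have y_wt : y = w + (x - z) by rewrite addrCA -opprB -xyzw opprB addrC subrK.
  have x_zt : x = z + (x - z) by rewrite addrC subrK.
  have ji : translate (line_system j) (x - z) = line_system i.
    rewrite (line_systemE zj wj zw) (line_translate invariant_B) -x_zt -y_wt.
    by rewrite -(line_systemE xi yi xy).
  have ij : i = j.
    apply/enum_val_inj/(canonical_translate_eq (line_system_canonical i)).
      exact: line_system_canonical.
    by rewrite -ji.
  subst j; have /eqP: x - z = 0.
    by apply: (line_free x y) => //; rewrite -(line_systemE xi yi xy).
  by rewrite subr_eq0 => /eqP xz; rewrite y_wt xz subrr addr0.
- move=> i; case/and3P: (line_system_canonical i) => i0 /andP[/card_gt2P] + _ _.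
  move=> [x [y [_ [[xi yi _] [xy _ _]]]]]; split=> //.
  by have [x0|] := eqVneq x 0; [exists y; rewrite // -x0 eq_sym | exists x].
- move=> i j ij; apply/setP => u; rewrite !inE.
  case/and3P: (line_system_canonical i) => i0 _ _.
  case/and3P: (line_system_canonical j) => j0 _ _.
  have [->|u0] := eqVneq u 0; first by rewrite i0 j0.
  apply/negP => /andP[ui uj]; move/eqP: ij; apply; apply: enum_val_inj.
  rewrite eq_sym in u0; rewrite -/(line_system i) -/(line_system j).
  by rewrite (line_systemE i0 ui u0) (line_systemE j0 uj u0).
Qed.

Lemma basis_not_sub_line_system X i a U :
  X \in B -> U \subset line_system i -> X != translate U a.
Proof.
move=> XB Ui; apply: contraTneq XB => ->.
case/and3P: (line_system_canonical i) Ui => _ /andP[_] /existsP[c] /existsP[d].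
case/andP=> cd /eqP-> _.
move=> /(translateS a); rewrite (line_translate invariant_B).
apply: contraTN => /(basis_not_sub_line bases_B rank3_B simple_B); apply.
by rewrite (inj_eq (addIr a)).
Qed.

Lemma dependent_triple_in_line_system X :
  #|X| = 3%N -> X \notin B ->
  exists i U a, U \subset line_system i /\ X = translate U a.
Proof.
move=> X3 XnB; have [x [y [z [xy yz zx Xxyz]]]] := card3P X3.
have Xxy : X \subset line x y.
  apply/subsetP => u; rewrite Xxyz !inE => /orP[/orP[]|] /eqP->.
  - exact: collinear_aba.
  - exact: collinear_abb.
  - by rewrite /collinear -Xxyz.
have long_xy : (2 < #|line x y|)%N.
  by rewrite -X3 subset_leq_card.
have [s canonical_s] := exists_canonical_translate xy long_xy.
have line_s : translate (line x y) s \in canonical_lines by rewrite inE.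
exists (enum_rank_in line_s (translate (line x y) s)), (translate X s), (- s).
by rewrite /line_system enum_rankK_in ?translateS ?translateK.
Qed.

End LineSystem.

Section PrimeCyclic.
Variable p : nat.
Hypothesis p_pr : prime p.

Lemma Zp_unit (t : 'Z_p) : t != 0 -> t \is a GRing.unit.
Proof.
move=> t0; rewrite -[t]natr_Zp unitZpE ?prime_gt1 // prime_coprime // gtnNdvd //.
  by rewrite lt0n; apply: contra t0 => /eqP t0; apply/eqP/val_inj.
by rewrite -[p in (_ < p)%N](Zp_cast (prime_gt1 p_pr)).
Qed.

Lemma Zp_natmul_surj (t : 'Z_p) y : t != 0 -> exists n, y = t *+ n.
Proof.
by move=> /Zp_unit tU; exists (t^-1 * y); rewrite -mulr_natr natr_Zp mulVKr.
Qed.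

Lemma Zp_translate_fixed (X : {set 'Z_p}) t x :
  t != 0 -> translate X t = X -> x \in X -> X = [set: 'Z_p].
Proof.
move=> t0 Xt xX; have mulX n : x + t *+ n \in X.
  elim: n => [|n IHn]; first by rewrite addr0.
  by rewrite -Xt mem_translate mulrSr addrA addrK.
apply/setP => y; rewrite inE; have [n yxn] := Zp_natmul_surj (y - x) t0.
by rewrite -(subrK x y) addrC yxn mulX.
Qed.

End PrimeCyclic.

Lemma Zp_line_translate_free p (B : {set {set 'Z_p}}) a b t : prime p ->
  is_matroid_bases B -> rank3 B -> simple_matroid B ->
  a != b -> translate (line B a b) t = line B a b -> t = 0.
Proof.
move=> p_pr bases_B rank3_B simple_B ab fixed; apply/eqP; apply: contraT => t0.
have [/set0Pn[X XB] _] := bases_B.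
have := basis_not_sub_line bases_B rank3_B simple_B XB ab.
by rewrite (Zp_translate_fixed p_pr t0 fixed (mem_line_l rank3_B a b)) subsetT.
Qed.

Theorem theorem3p28 (p : nat) (hp : prime p) (hodd : odd p)
  (B : {set {set 'Z_p}}) :
  is_matroid_bases B -> rank3 B -> simple_matroid B -> translation_invariant B ->
  exists (k : nat) (S : 'I_k -> {set 'Z_p}),
    distinct_difference_system S /\
    forall X : {set 'Z_p},
      X \in B <->
      (#|X| = 3%N /\
       ~ (exists (i : 'I_k) (U : {set 'Z_p}) (a : 'Z_p),
            U \subset S i /\ X = translate U a)).
Proof.
(* The argument does not use that p is odd. *)
move=> bases_B rank3_B simple_B invariant_B.
exists #|canonical_lines B|, (line_system (B := B)); split.
  apply: distinct_difference_line_system => // a b t.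
  exact: Zp_line_translate_free.
move=> X; split=> [XB | [X3 not_covered]].
  split=> [|[i [U [a [Ui XUa]]]]]; first exact: rank3_B.
  have := basis_not_sub_line_system bases_B rank3_B simple_B invariant_B a XB Ui.
  by rewrite XUa eqxx.
apply: contraT => /(dependent_triple_in_line_system rank3_B invariant_B X3) covered.
by case: (not_covered covered).
Qed.
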